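(* Fix $i\in[n]$ and $\mathbf{x}_{-i}\in\mathcal{C}_{-i}$, write $A=A(\mathbf{x}_{-i})$, and suppose $\mathbf{x}_i=(x_{ij})$ is a best response of player $i$, i.e. $\mathbf{x}_i\in\arg\max_{\mathbf{y}\in\vartheta_i(\mathbf{x}_{-i})}\mathcal{V}_i(\mathbf{y};\mathbf{x}_{-i})$. Then $(x_{ij})_{j\in A}$ is of one of the following two types. Type I: there is $J\subset A$ such that $x_{ij}=0$ for $j\in A\setminus J$, $\sum_{j\in J}x_{ij}<1$, and $(x_{ij})_{j\in J}$ is the unique solution (with $x_{ij}\in(0,\omega_{ij}-\mathbf{x}_T^{j|i})$) of the system $\psi_{ij}(x_{ij};\mathbf{x}_T^{j|i})=0$, $j\in J$. Type II: there are $J\subset A$ and a real $\kappa_0\ge0$ such that $x_{ij}=0$ for $j\in A\setminus J$, and $(x_{ij})_{j\in J}$ is given by the unique solution (with $x_{ij}\in(0,\omega_{ij}-\mathbf{x}_T^{j|i})$) of the system $\sum_{j\in J}x_{ij}=1$ and $x_{ij}^{a_i-1}\psi_{ij}(x_{ij};\mathbf{x}_T^{j|i})=\kappa_0$ for $j\in J$.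
   Context: Fragile multi-CPR Game: $n,m\ge1$, $[k]=\{1,\dots,k\}$, $C_m=\{(x_1,\dots,x_m)\in[0,1]^m:\sum_j x_j\le1\}$, $\mathcal{C}_{-i}=\prod_{[n]\setminus\{i\}}C_m$; for a profile $(\mathbf{x}_i,\mathbf{x}_{-i})$, $\mathbf{x}_\ell=(x_{\ell1},\dots,x_{\ell m})$, put $\mathbf{x}_T^{(j)}=\sum_{\ell}x_{\ell j}$ and $\mathbf{x}_T^{j|i}=\sum_{\ell\ne i}x_{\ell j}$. Each CPR $j$ has a return rate $\mathcal{R}_j(t)>1$ and failure probability $p_j(t)\in[0,1]$; each player $i$ has parameters $a_i,k_i$. Effective rate: $\mathcal{F}_{ij}(t)=(\mathcal{R}_j(t)-1)^{a_i}(1-p_j(t))-k_ip_j(t)$; utility $\mathcal{V}_i(\mathbf{x}_i;\mathbf{x}_{-i})=\sum_j x_{ij}^{a_i}\mathcal{F}_{ij}(\mathbf{x}_T^{(j)})$. Assumption: (1) $p_j(0)=0$, $p_j(t)=1$ for $t\ge1$; (2) $a_i\in(0,1]$, $k_i>0$; (3) each $\mathcal{F}_{ij}$ (continuous on $[0,1]$) has strictly negative first and second derivatives on $(0,1)$. Let $\omega_{ij}\in(0,1)$ be the unique zero of $\mathcal{F}_{ij}$ in $(0,1)$. Active CPRs: $A(\mathbf{x}_{-i})=\{j:\mathbf{x}_T^{j|i}<\omega_{ij}\}$. Constraint policy: $\vartheta_i(\mathbf{x}_{-i})=C_m\cap\big(\prod_{j\in A(\mathbf{x}_{-i})}[0,\omega_{ij}-\mathbf{x}_T^{j|i}]\times\prod_{j\notin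 A(\mathbf{x}_{-i})}\{0\}\big)$. Define $\psi_{ij}(x;s)=x\,\mathcal{F}_{ij}'(x+s)+a_i\mathcal{F}_{ij}(x+s)$. *)

From HB Require Import structures.
From mathcomp Require Import all_boot all_order all_algebra.
From mathcomp Require Import all_classical all_reals all_analysis.
Set Implicit Arguments. Unset Strict Implicit. Unset Printing Implicit Defensive.
Import Order.TTheory GRing.Theory Num.Theory.
Import numFieldNormedType.Exports.
Local Open Scope ring_scope.

Definition inCm (R : realType) (m : nat) (y : 'I_m -> R) : Prop :=
  (forall j, 0 <= y j <= 1) /\ \sum_(j < m) y j <= 1.

Definition Feff (R : realType) (Rr p : R -> R) (a k : R) (t : R) : R :=
  (Rr t - 1) `^ a * (1 - p t) - k * p t.

Definition others_total (R : realType) (n m : nat) (i : 'I_n)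
  (X : 'I_n -> 'I_m -> R) (j : 'I_m) : R :=
  \sum_(l < n | l != i) X l j.

Definition utility (R : realType) (m : nat) (a : R) (F : 'I_m -> R -> R)
  (s : 'I_m -> R) (y : 'I_m -> R) : R :=
  \sum_(j < m) (y j) `^ a * F j (y j + s j).

Definition active (R : realType) (m : nat) (w s : 'I_m -> R) : {set 'I_m} :=
  [set j | s j < w j].

Definition theta (R : realType) (m : nat) (w s : 'I_m -> R) (y : 'I_m -> R) : Prop :=
  inCm y /\
  (forall j, j \in active w s -> 0 <= y j <= w j - s j) /\
  (forall j, j \notin active w s -> y j = 0).

Definition psi (R : realType) (F : R -> R) (a : R) (x s : R) : R :=
  x * derive1 F (x + s) + a * F (x + s).

From HB Require Import structures.
From mathcomp Require Import all_boot all_order all_algebra.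
From mathcomp Require Import all_classical all_reals all_analysis.
From mathcomp Require Import ring lra.
Set Implicit Arguments. Unset Strict Implicit. Unset Printing Implicit Defensive.
Import Order.TTheory GRing.Theory Num.Theory.
Import numFieldNormedType.Exports.
Local Open Scope classical_set_scope.
Local Open Scope ring_scope.

(** Write the utility as [sum_j g_j(y_j)] with [g_j(u) = u^a F_j(u + s_j)], so that
    [g_j'(u) = u^(a-1) psi_j(u; s_j)].  A best response never sits at a cap
    [omega_j - s_j]: there [g_j] vanishes, while halving the coordinate is feasible and
    gives [g_j > 0].  Hence every positive coordinate is interior to its box.  If the
    budget is slack, each positive [x_j] is a local maximiser of [g_j], so [psi_j = 0]
    (type I).  If the budget is exhausted, shifting mass between two positive
    coordinates is feasible, so their marginals [g_j'(x_j)] agree, and removing mass is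
    feasible, so the common marginal is [>= 0] (type II).  Uniqueness of the solutions
    comes from [psi_j] and [u^(a-1) psi_j] being strictly decreasing on
    [(0, omega_j - s_j)], by the monotonicity and concavity of [F_j]. *)

Section OneVariable.
Variable R : realType.

Lemma is_derive_ge0_at_left_max (f : R -> R) (t d r : R) : 0 < r -> is_derive t 1 f d ->
  (forall h, 0 < h < r -> f (t - h) <= f t) -> 0 <= d.
Proof.
move=> r0 [fd <-] fmax; rewrite ['D_1 f t]cvg_at_leftE //; apply: limr_ge.
  rewrite -(cvg_at_leftE (fun h => h^-1 *: ((f \o shift t) _ - f t))) //.
  apply: cvg_trans fd; apply: cvg_app.
  move=> A [e e0 Ae]; exists e => // h he h0; apply: Ae => //.
  exact/ltr0_neq0.
near=> h; apply: mulr_le0.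
  by rewrite invr_le0; apply: ltW; near: h; exists 1 => /=.
rewrite subr_le0 [_%:A]mulr1 /= addrC -[h]opprK; apply: fmax; near: h.
exists r => //= h; rewrite /ball_ /= sub0r normrN ltr_norml => /andP[hr1 hr2] h0.
by apply/andP; split; lra.
Unshelve. all: by end_near. Qed.

Lemma is_derive_le0_at_right_max (f : R -> R) (t d r : R) : 0 < r -> is_derive t 1 f d ->
  (forall h, 0 < h < r -> f (t + h) <= f t) -> d <= 0.
Proof.
move=> r0 fd fmax; rewrite -oppr_ge0.
have fNd : is_derive (- t) 1 (f \o -%R) (- d).
  by rewrite -[- d]mulrN1; apply: is_derive1_comp; rewrite opprK.
apply: (is_derive_ge0_at_left_max r0 fNd) => h hr.
by rewrite /= opprD !opprK; exact: fmax.
Qed.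

Lemma is_derive_eq0_at_local_max (f : R -> R) (t d r : R) : 0 < r -> is_derive t 1 f d ->
  (forall h, `|h| < r -> f (t + h) <= f t) -> d = 0.
Proof.
move=> r0 fd fmax; apply/eqP; rewrite eq_le; apply/andP; split.
  apply: (is_derive_le0_at_right_max r0 fd) => h /andP[h0 hr].
  by apply: fmax; rewrite gtr0_norm.
apply: (is_derive_ge0_at_left_max r0 fd) => h /andP[h0 hr].
by apply: fmax; rewrite normrN gtr0_norm.
Qed.

Lemma is_derive_comp_shift (f : R -> R) (t d : R) :
  is_derive t 1 f d -> is_derive (0 : R) 1 (f \o shift t) d.
Proof.
move=> fd; rewrite -[d]mulr1; apply: is_derive1_comp; last exact: is_derive_shift.
by rewrite /shift /= add0r.
Qed.

Lemma derive1_lt0_homo_oo (f : R -> R) (b c : R) :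
  (forall t, t \in `]b, c[ -> derivable f t 1 /\ derive1 f t < 0) ->
  {in `]b, c[ &, {homo f : x y /~ x < y}}.
Proof.
move=> df; apply: ltr0_derive1_lt_oo.
- by move=> t /df[].
- by move=> t /df[].
- move=> t /set_mem /= /df[dft _].
  exact/differentiable_continuous/derivable1_diffP.
Qed.

End OneVariable.

(* [utility a F s y] is convertible to [\sum_j payoff a (F j) (s j) (y j)]. *)
Definition payoff (R : realType) (a : R) (F : R -> R) (s u : R) : R :=
  u `^ a * F (u + s).

Lemma is_derive_payoff (R : realType) (F : R -> R) (a s t : R) :
  0 < a -> 0 < t -> derivable F (t + s) 1 ->
  is_derive t 1 (payoff a F s) (t `^ (a - 1) * psi F a t s).
Proof.
move=> a0 t0 dF.
have dFs : is_derive t 1 (F \o shift s) (derive1 F (t + s)).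
  rewrite -[X in is_derive _ _ _ X]mulr1; apply: is_derive1_comp.
    by rewrite derive1E; exact: derivableP.
  exact: is_derive_shift.
have -> : payoff a F s = (@powR R ^~ a) * (F \o shift s) by apply/funext.
apply: is_derive_eq (is_deriveM (is_derive1_powR a t0) dFs) _.
rewrite /psi /= -(mulr_powRB1 (ltW t0) a0) /GRing.scale /=.
ring.
Qed.

Section PsiMonotone.
Variables (R : realType) (F : R -> R) (a s w : R).
Hypothesis F_decr : {in `]0, 1[ &, {homo F : x y /~ x < y}}.
Hypothesis F'_decr : {in `]0, 1[ &, {homo derive1 F : x y /~ x < y}}.
Hypothesis F'_lt0 : forall t, t \in `]0, 1[ -> derive1 F t < 0.
Hypotheses (s_ge0 : 0 <= s) (w_lt1 : w < 1) (Fw : F w = 0) (a_gt0 : 0 < a).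

Let shifted_facts (u v : R) : u \in `]0, w - s[ -> v \in `]0, w - s[ -> u < v ->
  [/\ 0 < F (v + s), F (v + s) < F (u + s),
      derive1 F (v + s) < derive1 F (u + s) & derive1 F (u + s) < 0].
Proof.
have s0 := s_ge0; have w1 := w_lt1.
rewrite !in_itv /= => /andP[u0 uw] /andP[v0 vw] uv.
have itv (z : R) : 0 < z -> z < w - s -> z + s \in `]0, 1[.
  by move=> z0 zw; rewrite in_itv /=; apply/andP; split; lra.
have iu := itv u u0 uw; have iv := itv v v0 vw.
have iw : w \in `]0, 1[ by rewrite in_itv /=; apply/andP; split; lra.
split; last exact: F'_lt0.
- by rewrite -Fw; apply: F_decr => //; lra.
- by apply: F_decr => //; lra.
- by apply: F'_decr => //; lra.
Qed.

Lemma psi_decr : {in `]0, w - s[ &, {homo (fun u => psi F a u s) : u v /~ u < v}}.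
Proof.
move=> v u iv iu uv; have [Fv0 Fuv F'uv F'u0] := shifted_facts iu iv uv.
move: iu; rewrite in_itv /= => /andP[u0 _].
have a0 := a_gt0; rewrite /psi; nra.
Qed.

Hypothesis a_le1 : a <= 1.

Lemma powR_psi_decr :
  {in `]0, w - s[ &, {homo (fun u => u `^ (a - 1) * psi F a u s) : u v /~ u < v}}.
Proof.
move=> v u iv iu uv; have [Fv0 Fuv F'uv F'u0] := shifted_facts iu iv uv.
move: iu; rewrite in_itv /= => /andP[u0 _].
have a0 := a_gt0; have a1 := a_le1; have v0 : 0 < v by lra.
have vpos : 0 < v `^ (a - 1) by exact: powR_gt0.
have pow_le : v `^ (a - 1) <= u `^ (a - 1).
  have -> : a - 1 = - (1 - a) by ring.
  rewrite !powRN lef_pV2 ?posrE ?powR_gt0 //.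
  by apply: ge0_ler_powR; rewrite ?nnegrE; lra.
have pow_lt : u `^ a < v `^ a by apply: gt0_ltr_powR; rewrite ?nnegrE; lra.
have E (z : R) : 0 < z ->
    z `^ (a - 1) * psi F a z s = z `^ a * derive1 F (z + s) + a * (z `^ (a - 1) * F (z + s)).
  by move=> z0; rewrite /psi -(mulr_powRB1 (ltW z0) a0); ring.
rewrite !E //.
have h1 : v `^ a * derive1 F (v + s) < u `^ a * derive1 F (u + s).
  have := powR_ge0 v a; nra.
have h2 : v `^ (a - 1) * F (v + s) <= u `^ (a - 1) * F (u + s) by nra.
nra.
Qed.

Lemma psi_inj : {in `]0, w - s[ &, injective (fun u => psi F a u s)}.
Proof. exact/dec_inj_in/le_nmono_in/psi_decr. Qed.

Lemma powR_psi_inj :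
  {in `]0, w - s[ &, injective (fun u => u `^ (a - 1) * psi F a u s)}.
Proof. exact/dec_inj_in/le_nmono_in/powR_psi_decr. Qed.

End PsiMonotone.

Lemma big_dfwith (V : zmodType) (I : finType) (T : Type) (G : I -> T -> V)
    (y : I -> T) (j : I) (v : T) :
  \sum_k G k (dfwith y j v k) = \sum_k G k (y k) - G j (y j) + G j v.
Proof.
rewrite (bigD1 j) // [in RHS](bigD1 j) // dfwithin.
rewrite (eq_bigr (fun k => G k (y k))) => [|k kj].
  by rewrite /= [G j (y j) + _]addrC addrK addrC.
by rewrite dfwithout // eq_sym.
Qed.

Definition capped (R : realType) (m : nat) (w s y : 'I_m -> R) : Prop :=
  (forall j, j \in active w s -> 0 <= y j <= w j - s j) /\
  (forall j, j \notin active w s -> y j = 0).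

Lemma thetaE (R : realType) (m : nat) (w s y : 'I_m -> R) :
  (forall j, 0 <= s j) -> (forall j, w j <= 1) ->
  theta w s y <-> capped w s y /\ \sum_j y j <= 1.
Proof.
move=> s_ge0 w_le1; split => [[[_ y_sum] y_caps] //|[[y_cap y_out] y_sum]].
split=> //; split=> // j.
case: (boolP (j \in active w s)) => [/y_cap|/y_out->]; last by rewrite lexx ler01.
by have := s_ge0 j; have := w_le1 j => ? ? /andP[? ?]; apply/andP; split; lra.
Qed.

Lemma capped_dfwith (R : realType) (m : nat) (w s y : 'I_m -> R) j v :
  capped w s y -> j \in active w s -> 0 <= v <= w j - s j -> capped w s (dfwith y j v).
Proof.
move=> [y_cap y_out] jA v_cap; split=> k; case: dfwithP => [//|k' _].
- exact: y_cap.
- by rewrite jA.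
- exact: y_out.
Qed.

Lemma others_total_ge0 (R : realType) (n m : nat) (i : 'I_n) (X : 'I_n -> 'I_m -> R) j :
  (forall l, l != i -> inCm (X l)) -> 0 <= others_total i X j.
Proof. by move=> hX; apply: sumr_ge0 => l /hX[/(_ j) /andP[]]. Qed.

Lemma theta_support (R : realType) (m : nat) (w s y : 'I_m -> R) : theta w s y ->
  [/\ [set j | 0 < y j]%SET \subset active w s,
      (forall j, j \notin [set j | 0 < y j]%SET -> y j = 0) &
      \sum_(j in [set j | 0 < y j]%SET) y j = \sum_j y j].
Proof.
move=> [[y01 _] [_ y_out]].
have y_off j : j \notin [set j | 0 < y j]%SET -> y j = 0.
  by rewrite inE -leNgt => yj; apply/eqP; rewrite eq_le yj; case/andP: (y01 j).
split => //.
  by apply/fintype.subsetP => j; rewrite inE; apply: contraTT => /y_out ->; rewrite ltxx.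
by rewrite big_mkcond /=; apply: eq_bigr => j _; case: ifPn => // /y_off ->.
Qed.

Section BestResponse.
Variables (R : realType) (m : nat) (a : R) (F : 'I_m -> R -> R) (w s x : 'I_m -> R).
Hypotheses (a_gt0 : 0 < a) (s_ge0 : forall j, 0 <= s j) (w_lt1 : forall j, w j < 1).
Hypothesis Fw : forall j, F j (w j) = 0.
Hypothesis F_decr : forall j, {in `]0, 1[ &, {homo F j : u v /~ u < v}}.
Hypothesis F_derivable : forall j t, 0 < t < 1 -> derivable (F j) t 1.
Hypothesis x_feasible : theta w s x.
Hypothesis x_best : forall y, theta w s y -> utility a F s y <= utility a F s x.

Local Notation A := (active w s).
Local Notation g j := (payoff a (F j) (s j)).
Local Notation marginal j := (x j `^ (a - 1) * psi (F j) a (x j) (s j)).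

Let thetaE' y : theta w s y <-> capped w s y /\ \sum_j y j <= 1.
Proof. by apply: thetaE => // j; apply: ltW. Qed.

Let x_capped : capped w s x. Proof. by case/thetaE': x_feasible. Qed.
Let x_sum : \sum_j x j <= 1. Proof. by case/thetaE': x_feasible. Qed.

Let active_pos j : 0 < x j -> j \in A.
Proof.
by move=> xj_gt0; apply: contraTT xj_gt0 => /x_capped.2 ->; rewrite ltxx.
Qed.

Let utility_dfwith y j v :
  utility a F s (dfwith y j v) = utility a F s y - g j (y j) + g j v.
Proof. exact: (big_dfwith (fun k => payoff a (F k) (s k))). Qed.

Let sum_dfwith (y : 'I_m -> R) j v : \sum_k dfwith y j v k = \sum_k y k - y j + v.
Proof. exact: (big_dfwith (fun _ u => u)). Qed.

Lemma best_response_deviation j v : j \in A -> 0 <= v <= w j - s j ->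
  \sum_k x k - x j + v <= 1 -> g j v <= g j (x j).
Proof.
move=> jA v_cap sum_le.
have : theta w s (dfwith x j v).
  by apply/thetaE'; rewrite sum_dfwith /=; split => //; exact: capped_dfwith.
by move/x_best; rewrite utility_dfwith /=; lra.
Qed.

Lemma best_response_transfer j l h : j != l -> j \in A -> l \in A ->
  0 <= x j + h <= w j - s j -> 0 <= x l - h <= w l - s l ->
  g j (x j + h) + g l (x l - h) <= g j (x j) + g l (x l).
Proof.
move=> jl jA lA j_cap l_cap.
have xl : dfwith x j (x j + h) l = x l by rewrite dfwithout.
have : theta w s (dfwith (dfwith x j (x j + h)) l (x l - h)).
  apply/thetaE'; rewrite !sum_dfwith /= xl; split; last by have := x_sum; lra.
  by apply: capped_dfwith; rewrite ?xl //; exact: capped_dfwith.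
by move/x_best; rewrite !utility_dfwith /= xl; lra.
Qed.

Lemma best_response_lt_cap j : 0 < x j -> x j < w j - s j.
Proof.
move=> xj_gt0; have jA := active_pos xj_gt0.
have /andP[_ xj_le] := x_capped.1 j jA.
rewrite lt_neqAle xj_le andbT; apply/negP => /eqP xj_eq.
have sj := s_ge0 j; have wj := w_lt1 j; have xs := x_sum.
have gx0 : g j (x j) = 0 by rewrite /payoff xj_eq subrK Fw mulr0.
have g_half : 0 < g j (x j / 2).
  apply: mulr_gt0; first by apply: powR_gt0; lra.
  rewrite -(Fw j); apply: F_decr; rewrite ?in_itv /=; try (apply/andP; split); lra.
suff : g j (x j / 2) <= 0 by lra.
by rewrite -gx0; apply: best_response_deviation => //; try (apply/andP; split); lra.
Qed.

Lemma is_derive_payoff_best_response j : 0 < x j -> is_derive (x j) 1 (g j) (marginal j).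
Proof.
move=> xj_gt0; apply: is_derive_payoff => //; apply: F_derivable.
have := best_response_lt_cap xj_gt0; have := s_ge0 j; have := w_lt1 j.
by move=> ? ? ?; apply/andP; split; lra.
Qed.

Lemma best_response_psi_eq0 j : \sum_k x k < 1 -> 0 < x j -> psi (F j) a (x j) (s j) = 0.
Proof.
move=> sum_lt1 xj_gt0; have xj_lt := best_response_lt_cap xj_gt0.
pose r := Num.min (x j) (Num.min (w j - s j - x j) (1 - \sum_k x k)).
have r_gt0 : 0 < r by rewrite !lt_min; apply/and3P; split; lra.
have : marginal j = 0.
  apply: (is_derive_eq0_at_local_max r_gt0 (is_derive_payoff_best_response xj_gt0)).
  move=> h; rewrite !lt_min !ltr_norml => /and3P[/andP[? ?] /andP[? ?] /andP[? ?]].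
  by apply: best_response_deviation; rewrite ?active_pos //; try (apply/andP; split); lra.
by move/eqP; rewrite mulf_eq0 gt_eqF ?powR_gt0 //= => /eqP.
Qed.

Lemma best_response_marginal_ge0 j : 0 < x j -> 0 <= marginal j.
Proof.
move=> xj_gt0; have xs := x_sum; have xj_lt := best_response_lt_cap xj_gt0.
apply: (is_derive_ge0_at_left_max xj_gt0 (is_derive_payoff_best_response xj_gt0)).
move=> h /andP[? ?]; apply: best_response_deviation; rewrite ?active_pos //.
  by apply/andP; split; lra.
lra.
Qed.

Lemma best_response_marginal_eq j l : 0 < x j -> 0 < x l -> marginal j = marginal l.
Proof.
move=> xj_gt0 xl_gt0; have [-> //|jl] := eqVneq j l.
have xj_lt := best_response_lt_cap xj_gt0; have xl_lt := best_response_lt_cap xl_gt0.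
pose phi := (g j \o shift (x j)) + ((g l \o shift (x l)) \o -%R).
have dphi : is_derive (0 : R) 1 phi (marginal j + marginal l * -1).
  apply: is_deriveD; first exact/is_derive_comp_shift/is_derive_payoff_best_response.
  apply: is_derive1_comp; rewrite oppr0.
  exact/is_derive_comp_shift/is_derive_payoff_best_response.
pose r := Num.min (Num.min (x j) (w j - s j - x j)) (Num.min (x l) (w l - s l - x l)).
have r_gt0 : 0 < r by rewrite !lt_min; apply/andP; split; apply/andP; split; lra.
have /eqP : marginal j + marginal l * -1 = 0.
  apply: (is_derive_eq0_at_local_max r_gt0 dphi) => h.
  rewrite !lt_min !ltr_norml.
  move=> /andP[/andP[/andP[? ?] /andP[? ?]] /andP[/andP[? ?] /andP[? ?]]].
  rewrite /phi addrfctE /shift /= oppr0 !add0r (addrC h) (addrC (- h)).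
  by apply: best_response_transfer; rewrite ?active_pos //; apply/andP; split; lra.
by rewrite mulrN1 subr_eq0 => /eqP.
Qed.

End BestResponse.

Theorem theorem8 (R : realType) (n m : nat)
  (Rr p : 'I_m -> R -> R) (a k : 'I_n -> R) (w : 'I_n -> 'I_m -> R)
  (hm : (0 < m)%N)
  (* return rates > 1, failure probabilities in [0,1] *)
  (hR : forall j (t : R), 0 <= t -> 1 < Rr j t)
  (hp : forall j (t : R), 0 <= t -> 0 <= p j t <= 1)
  (* Assumption (1) *)
  (hp0 : forall j, p j 0 = 0)
  (hp1 : forall j t, 1 <= t -> p j t = 1)
  (* Assumption (2) *)
  (ha : forall l, 0 < a l <= 1)
  (hk : forall l, 0 < k l)
  (* Assumption (3) *)
  (hFc : forall l j, {within `[(0:R), 1], continuous (Feff (Rr j) (p j) (a l) (k l))})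
  (hF1 : forall l j (t : R), 0 < t < 1 ->
     derivable (Feff (Rr j) (p j) (a l) (k l)) t 1 /\
     derive1 (Feff (Rr j) (p j) (a l) (k l)) t < 0)
  (hF2 : forall l j (t : R), 0 < t < 1 ->
     derivable (derive1 (Feff (Rr j) (p j) (a l) (k l))) t 1 /\
     derive1 (derive1 (Feff (Rr j) (p j) (a l) (k l))) t < 0)
  (* omega_lj : the zero of F_lj in (0,1) *)
  (hw : forall l j, 0 < w l j < 1 /\ Feff (Rr j) (p j) (a l) (k l) (w l j) = 0)
  (i : 'I_n) (X : 'I_n -> 'I_m -> R)
  (hX : forall l, l != i -> inCm (X l))
  (x : 'I_m -> R) :
  let F := fun j => Feff (Rr j) (p j) (a i) (k i) in
  let s := others_total i X in
  let A := active (w i) s in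
  theta (w i) s x ->
  (forall y, theta (w i) s y -> utility (a i) F s y <= utility (a i) F s x) ->
  (* Type I *)
  (exists J : {set 'I_m}, [/\ J \subset A,
     (forall j, j \in A :\: J -> x j = 0),
     \sum_(j in J) x j < 1,
     (forall j, j \in J -> 0 < x j < w i j - s j /\ psi (F j) (a i) (x j) (s j) = 0) &
     (forall z : 'I_m -> R,
        (forall j, j \in J -> 0 < z j < w i j - s j /\ psi (F j) (a i) (z j) (s j) = 0) ->
        forall j, j \in J -> z j = x j)])
  \/
  (* Type II *)
  (exists (J : {set 'I_m}) (kappa0 : R), [/\ J \subset A, 0 <= kappa0,
     (forall j, j \in A :\: J -> x j = 0),
     (\sum_(j in J) x j = 1 /\
      forall j, j \in J -> 0 < x j < w i j - s j /\
        (x j) `^ (a i - 1) * psi (F j) (a i) (x j) (s j) = kappa0) &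
     (forall z : 'I_m -> R,
        (\sum_(j in J) z j = 1 /\
         forall j, j \in J -> 0 < z j < w i j - s j /\
           (z j) `^ (a i - 1) * psi (F j) (a i) (z j) (s j) = kappa0) ->
        forall j, j \in J -> z j = x j)]).
Proof.
move=> F s A x_feasible x_best.
have [a_gt0 a_le1] := andP (ha i).
have s_ge0 j : 0 <= s j by exact: others_total_ge0.
have w_lt1 j : w i j < 1 by case: (hw i j) => /andP[].
have Fw j : F j (w i j) = 0 by case: (hw i j).
have F_der j t : 0 < t < 1 -> derivable (F j) t 1 by case/(hF1 i j).
have F'_lt0 j t : t \in `]0, 1[ -> derive1 (F j) t < 0 by rewrite in_itv => /(hF1 i j)[].
have F_decr j : {in `]0, 1[ &, {homo F j : u v /~ u < v}}.
  by apply: derive1_lt0_homo_oo => t; rewrite in_itv; exact: hF1.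
have F'_decr j : {in `]0, 1[ &, {homo derive1 (F j) : u v /~ u < v}}.
  by apply: derive1_lt0_homo_oo => t; rewrite in_itv; exact: hF2.
have [J_sub x_off sum_J] := theta_support x_feasible.
set J := [set j | 0 < x j]%SET in J_sub x_off sum_J *.
have J_cap j : j \in J -> 0 < x j < w i j - s j.
  by rewrite inE => xj; rewrite xj; apply: (best_response_lt_cap (a := a i) (F := F)).
have x_off_A j : j \in A :\: J -> x j = 0 by case/setDP => _ /x_off.
have [sum_lt1|sum_ge1] := ltP (\sum_j x j) 1.
  have psi_x j : j \in J -> psi (F j) (a i) (x j) (s j) = 0.
    by rewrite inE; apply: best_response_psi_eq0.
  left; exists J; split; rewrite ?sum_J //.
    by move=> j jJ; split; [exact: J_cap | exact: psi_x].
  move=> z z_sol j jJ; have [z_itv psi_z] := z_sol j jJ.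
  by apply: (psi_inj (F_decr j) (F'_decr j) (F'_lt0 j) (s_ge0 j) (w_lt1 j) (Fw j) a_gt0);
    rewrite /= ?in_itv ?J_cap ?psi_z ?psi_x.
have sum1 : \sum_j x j = 1 by apply/eqP; rewrite eq_le sum_ge1 andbT; case: x_feasible => [[]].
have [J0|[j0 j0J]] := set_0Vmem J.
  by move: sum1; rewrite -sum_J J0 big_set0 => /esym/eqP; rewrite oner_eq0.
have xj0 : 0 < x j0 by rewrite inE in j0J.
have marg_x j : j \in J -> x j `^ (a i - 1) * psi (F j) (a i) (x j) (s j) =
    x j0 `^ (a i - 1) * psi (F j0) (a i) (x j0) (s j0).
  by rewrite inE => xj; apply: best_response_marginal_eq.
right; exists J, (x j0 `^ (a i - 1) * psi (F j0) (a i) (x j0) (s j0)); split => //.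
- exact: best_response_marginal_ge0.
- by split=> [|j jJ]; [rewrite sum_J | split; [exact: J_cap | exact: marg_x]].
move=> z [_ z_sol] j jJ; have [z_itv marg_z] := z_sol j jJ.
by apply: (powR_psi_inj (F_decr j) (F'_decr j) (F'_lt0 j) (s_ge0 j) (w_lt1 j) (Fw j) a_gt0 a_le1);
  rewrite /= ?in_itv ?J_cap ?marg_z ?marg_x.
Qed.
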